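(* For all $n\ge0$, $r_1,r_2\in(-1,1)$ and $-1<q\le1$, \[ \sum_{s=0}^{n}\genfrac{[}{]}{0pt}{}{n}{s}_{q}r_{1}^{n-s}r_{2}^{s}\frac{(r_{1}^{2})_{s}(r_{1}r_{2})_{s}}{(r_{1}^{2}r_{2}^{2})_{s}}=\frac{w_{n}(0,r_{1},r_{2},q)}{(r_{1}^{2}r_{2}^{2})_{n}}=\phi_{n}(r_{1},r_{2},q). \]
   Context: Notation: $(a)_n=\prod_{j=0}^{n-1}(1-aq^j)$, $(a)_0=1$; $[n]_q=1+\dots+q^{n-1}$, $[0]_q=0$, $[n]_q!=\prod_{j=1}^n[j]_q$, $[0]_q!=1$; $\genfrac{[}{]}{0pt}{}{n}{k}_q=\frac{[n]_q!}{[n-k]_q![k]_q!}$ for $0\le k\le n$, else $0$. $w_n(m,r_1,r_2,q)=\sum_{s=0}^n\genfrac{[}{]}{0pt}{}{n}{s}_q r_1^s(q^mr_2^2)_s\,r_2^{n-s}(q^mr_1^2)_{n-s}$, $\phi_n(r_1,r_2,q)=w_n(0,r_1,r_2,q)/(r_1^2r_2^2)_n$. *)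

(* the identity is algebraic; stated over any real field. *)
From HB Require Import structures.
From mathcomp Require Import all_boot all_order all_algebra.
Set Implicit Arguments. Unset Strict Implicit. Unset Printing Implicit Defensive.
Import Order.TTheory GRing.Theory Num.Theory.
Local Open Scope ring_scope.

Section QDefs.
Variable R : fieldType.

Definition qpoch (q a : R) (n : nat) : R := \prod_(j < n) (1 - a * q ^+ j).

Definition qint (q : R) (n : nat) : R := \sum_(j < n) q ^+ j.

Definition qfact (q : R) (n : nat) : R := \prod_(1 <= j < n.+1) qint q j.

Definition qbinom (q : R) (n k : nat) : R :=
  if (k <= n)%N then qfact q n / (qfact q (n - k) * qfact q k) else 0.

Definition w_n (n m : nat) (r1 r2 q : R) : R :=
  \sum_(0 <= s < n.+1)
    qbinom q n s * r1 ^+ s * qpoch q (q ^+ m * r2 ^+ 2) s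
      * r2 ^+ (n - s) * qpoch q (q ^+ m * r1 ^+ 2) (n - s).

Definition phi_n (n : nat) (r1 r2 q : R) : R :=
  w_n n 0 r1 r2 q / qpoch q (r1 ^+ 2 * r2 ^+ 2) n.

End QDefs.

(* Both sides are specialisations of two q-binomial sums
     F_n(a, b, c; u, v) = sum_s [n, s] u^(n-s) v^s (a)_s (b)_s (c q^s)_(n-s)   ([pochsum3]),
     W_n(x, y; u, v)   = sum_s [n, s] u^s (x)_s v^(n-s) (y)_(n-s)            ([pochsum2]):
   multiplying the left-hand side by (r1^2 r2^2)_n = (r1^2 r2^2)_s (r1^2 r2^2 q^s)_(n-s)
   gives F_n(r1^2, r1 r2, r1^2 r2^2; r1, r2), and w_n(0, r1, r2) = W_n(r2^2, r1^2; r1, r2).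
   The two q-Pascal rules give first-order recurrences in n for F and W, and together with
   the contiguous relation of W in its first parameter they prove by induction that
   F_n(a, b, a x; u, v) = W_n(x, a; u, v) whenever b v = x u.  The bounds on r1, r2, q only
   ensure that the q-integers [j+1]_q and the Pochhammer symbol (r1^2 r2^2)_n do not vanish. *)

From HB Require Import structures.
From mathcomp Require Import all_boot all_order all_algebra.
From mathcomp Require Import zify ring.
Set Implicit Arguments.
Unset Strict Implicit.
Unset Printing Implicit Defensive.

Import Order.TTheory GRing.Theory Num.Theory.
Local Open Scope ring_scope.

Section QAnalogues.
Variables (R : fieldType) (q : R).

Lemma qpoch0 a : qpoch q a 0 = 1.
Proof. by rewrite /qpoch big_ord0. Qed.

Lemma qpochS a s : qpoch q a s.+1 = qpoch q a s * (1 - a * q ^+ s).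
Proof. by rewrite /qpoch big_ord_recr. Qed.

Lemma qpochSl a s : qpoch q a s.+1 = (1 - a) * qpoch q (a * q) s.
Proof.
rewrite /qpoch big_ord_recl expr0 mulr1; congr (_ * _).
by apply: eq_bigr => i _; rewrite lift0 exprS mulrA.
Qed.

Lemma qpochD a s m : qpoch q a (s + m) = qpoch q a s * qpoch q (a * q ^+ s) m.
Proof.
rewrite /qpoch big_split_ord; congr (_ * _).
by apply: eq_bigr => i _; rewrite /= exprD mulrA.
Qed.

Lemma qintD a b : qint q (a + b) = qint q a + q ^+ a * qint q b.
Proof.
rewrite /qint big_split_ord mulr_sumr; congr (_ + _).
by apply: eq_bigr => i _; rewrite /= exprD.
Qed.

Lemma qfact0 : qfact q 0 = 1.
Proof. by rewrite /qfact big_geq. Qed.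

Lemma qfactS m : qfact q m.+1 = qfact q m * qint q m.+1.
Proof. by rewrite /qfact big_nat_recr. Qed.

End QAnalogues.

Section QBinomial.
Variables (R : fieldType) (q : R).
Hypothesis qint_neq0 : forall j, qint q j.+1 != 0.

Lemma qfact_neq0 m : qfact q m != 0.
Proof.
elim: m => [|m IHm]; first by rewrite qfact0 oner_neq0.
by rewrite qfactS mulf_neq0.
Qed.

Lemma qbinomn0 n : qbinom q n 0 = 1.
Proof. by rewrite /qbinom leq0n subn0 qfact0 mulr1 divff ?qfact_neq0. Qed.

Lemma qbinomnn n : qbinom q n n = 1.
Proof. by rewrite /qbinom leqnn subnn qfact0 mul1r divff ?qfact_neq0. Qed.

Lemma qbinom_small n k : (n < k)%N -> qbinom q n k = 0.
Proof. by rewrite /qbinom ltnNge => /negbTE ->. Qed.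

Lemma qbinomSS_split n k c d : (k < n)%N ->
  qint q n.+1 = c * qint q k.+1 + d * qint q (n - k) ->
  qbinom q n.+1 k.+1 = c * qbinom q n k + d * qbinom q n k.+1.
Proof.
move=> kn hsplit; rewrite /qbinom !ifT ?subSS; try lia.
rewrite [qfact q n.+1]qfactS hsplit.
have -> : (n - k = (n - k.+1).+1)%N by lia.
rewrite !qfactS; field.
by rewrite !qint_neq0 !qfact_neq0.
Qed.

Lemma qbinomSS n k : qbinom q n.+1 k.+1 = qbinom q n k + q ^+ k.+1 * qbinom q n k.+1.
Proof.
case: (ltngtP k n) => [kn|nk|->]; last by rewrite !qbinomnn qbinom_small ?mulr0 ?addr0.
- rewrite -[qbinom q n k]mul1r; apply: qbinomSS_split; rewrite // mul1r -qintD.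
  congr qint; lia.
- by rewrite !qbinom_small ?mulr0 ?addr0 //; lia.
Qed.

Lemma qbinomSS' n k : qbinom q n.+1 k.+1 = qbinom q n k.+1 + q ^+ (n - k) * qbinom q n k.
Proof.
case: (ltngtP k n) => [kn|nk|->]; last by rewrite !qbinomnn subnn mul1r qbinom_small ?add0r.
- rewrite addrC -[qbinom q n k.+1]mul1r; apply: qbinomSS_split; rewrite // mul1r addrC -qintD.
  congr qint; lia.
- by rewrite !qbinom_small ?mulr0 ?addr0 //; lia.
Qed.

Definition pochterm2 n s (x y u v : R) :=
  u ^+ s * qpoch q x s * v ^+ (n - s) * qpoch q y (n - s).

Definition pochsum2 n (x y u v : R) :=
  \sum_(s < n.+1) qbinom q n s * pochterm2 n s x y u v.

Definition pochterm3 n s (a b c u v : R) :=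
  u ^+ (n - s) * v ^+ s * qpoch q a s * qpoch q b s * qpoch q (c * q ^+ s) (n - s).

Definition pochsum3 n (a b c u v : R) :=
  \sum_(s < n.+1) qbinom q n s * pochterm3 n s a b c u v.

Lemma pochsum3_div n (a b c u v : R) : qpoch q c n != 0 ->
  \sum_(0 <= s < n.+1)
     qbinom q n s * u ^+ (n - s) * v ^+ s * (qpoch q a s * qpoch q b s / qpoch q c s)
  = pochsum3 n a b c u v / qpoch q c n.
Proof.
move=> cn_neq0; apply: (mulIf cn_neq0); rewrite divfK // /pochsum3 big_mkord mulr_suml.
apply: eq_bigr => [[s /= hs]] _.
have cn_split : qpoch q c n = qpoch q c s * qpoch q (c * q ^+ s) (n - s).
  by rewrite -qpochD subnKC.
move: cn_neq0; rewrite cn_split mulf_eq0 negb_or => /andP[cs_neq0 _].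
by rewrite /pochterm3; field.
Qed.

Lemma w_nE n m (r1 r2 : R) :
  w_n n m r1 r2 q = pochsum2 n (q ^+ m * r2 ^+ 2) (q ^+ m * r1 ^+ 2) r1 r2.
Proof.
by rewrite /w_n /pochsum2 big_mkord; apply: eq_bigr => s _; rewrite /pochterm2 !mulrA.
Qed.

Lemma pochsum2S n (x y u v : R) : pochsum2 n.+1 x y u v =
  u * (1 - x) * pochsum2 n (x * q) y u v + v * (1 - y) * pochsum2 n x (y * q) (u * q) v.
Proof.
rewrite /pochsum2 big_ord_recl /=.
under eq_bigr => i _ do rewrite /bump /= add1n qbinomSS mulrDl.
rewrite big_split /= addrCA.
have -> : qbinom q n.+1 0 * pochterm2 n.+1 0 x y u v
   + \sum_(i < n.+1) q ^+ i.+1 * qbinom q n i.+1 * pochterm2 n.+1 i.+1 x y u v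
   = \sum_(i < n.+2) q ^+ i * qbinom q n i * pochterm2 n.+1 i x y u v.
  by rewrite [RHS]big_ord_recl !qbinomn0 expr0 !mul1r.
rewrite [\sum_(i < n.+2) _]big_ord_recr /= qbinom_small // mulr0 mul0r addr0.
rewrite !mulr_sumr; congr (_ + _); apply: eq_bigr => [[i /= hi]] _.
- rewrite /pochterm2 subSS qpochSl exprS; ring.
- rewrite /pochterm2 subSn // qpochSl exprS exprMn; ring.
Qed.

Lemma pochsum3S n (a b c u v : R) : pochsum3 n.+1 a b c u v =
  u * (1 - c * q ^+ n) * pochsum3 n a b c u v
  + v * (1 - a) * (1 - b) * pochsum3 n (a * q) (b * q) (c * q) (u * q) v.
Proof.
rewrite /pochsum3 big_ord_recl /=.
under eq_bigr => i _ do rewrite /bump /= add1n qbinomSS' mulrDl.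
rewrite big_split /= addrA.
have -> : qbinom q n.+1 0 * pochterm3 n.+1 0 a b c u v
   + \sum_(i < n.+1) qbinom q n i.+1 * pochterm3 n.+1 i.+1 a b c u v
   = \sum_(i < n.+2) qbinom q n i * pochterm3 n.+1 i a b c u v.
  by rewrite [RHS]big_ord_recl !qbinomn0.
rewrite big_ord_recr /= qbinom_small // mul0r addr0.
rewrite !mulr_sumr; congr (_ + _); apply: eq_bigr => [[i /= hi]] _.
- rewrite /pochterm3 subSn // qpochS -[_ * q ^+ (n - i)]mulrA -exprD subnKC // exprS; ring.
- rewrite /pochterm3 subSS !qpochSl exprS exprMn -[c * q * _]mulrA -[q * q ^+ i]exprS; ring.
Qed.

Lemma pochsum2_contiguous n (x y u v : R) :
  (1 - x) * pochsum2 n (x * q) y u v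
  = (1 - x * y * q ^+ n) * pochsum2 n x y u v
    - x * (1 - y) * pochsum2 n x (y * q) (u * q) v.
Proof.
apply/eqP; rewrite eq_sym subr_eq /pochsum2 !mulr_sumr -big_split /=; apply/eqP.
apply: eq_bigr => [[s /= hs]] _.
(* [ring:] rewrites with these equations left to right, so their left sides must be monomials. *)
have shift_x : x * qpoch q (x * q) s = qpoch q (x * q) s - qpoch q x s * (1 - x * q ^+ s).
  by rewrite -qpochS qpochSl; ring.
have shift_y : y * qpoch q (y * q) (n - s)
    = qpoch q (y * q) (n - s) - qpoch q y (n - s) * (1 - y * q ^+ (n - s)).
  by rewrite -qpochS qpochSl; ring.
have qn : q ^+ n = q ^+ s * q ^+ (n - s) by rewrite -exprD subnKC.
rewrite /pochterm2 exprMn qn; ring: shift_x shift_y.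
Qed.

Lemma pochsum3_pochsum2 n (a b x u v : R) : b * v = x * u ->
  pochsum3 n a b (a * x) u v = pochsum2 n x a u v.
Proof.
elim: n a b x u v => [|n IHn] a b x u v bv_xu.
  by rewrite /pochsum3 /pochsum2 !big_ord1 /pochterm3 /pochterm2 !qpoch0 !qbinomn0 !expr0 !mul1r.
rewrite pochsum3S pochsum2S -[a * x * q]mulrAC IHn // IHn; last by ring: bv_xu.
rewrite -[u * (1 - x) * _]mulrA pochsum2_contiguous; ring: bv_xu.
Qed.

End QBinomial.

Section RealField.
Variable R : realFieldType.

Lemma qint_neq0_real (q : R) j : -1 < q <= 1 -> qint q j.+1 != 0.
Proof.
case/andP=> q_gtN1 q_le1; have [->|q_neq1] := eqVneq q 1.
  rewrite /qint; under eq_bigr => i _ do rewrite expr1n.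
  by rewrite sumr_const card_ord pnatr_eq0.
have q_lt1 : `|q| < 1 by rewrite ltr_norml q_gtN1 lt_neqAle q_neq1.
apply/eqP => qint0; have := subrX1 q j.+1.
rewrite -/(qint q j.+1) qint0 mulr0 => /eqP; rewrite subr_eq0 => /eqP qX1.
by have := exprn_ilt1 j.+1 (normr_ge0 q) q_lt1; rewrite -normrX qX1 normr1 ltxx.
Qed.

Lemma qpoch_neq0_real (q c : R) k : `|c| < 1 -> `|q| <= 1 -> qpoch q c k != 0.
Proof.
move=> c_lt1 q_le1; apply/prodf_neq0 => j _.
rewrite subr_eq0 eq_sym lt_eqF //; apply: ltr_normlW; rewrite normrM normrX.
by apply: le_lt_trans c_lt1; rewrite ler_piMr ?exprn_ile1.
Qed.

End RealField.

Theorem mainTheorem7 (R : realFieldType) (n : nat) (r1 r2 q : R) :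
  -1 < r1 < 1 -> -1 < r2 < 1 -> -1 < q <= 1 ->
  (\sum_(0 <= s < n.+1)
     qbinom q n s * r1 ^+ (n - s) * r2 ^+ s
       * (qpoch q (r1 ^+ 2) s * qpoch q (r1 * r2) s
          / qpoch q (r1 ^+ 2 * r2 ^+ 2) s)
   = w_n n 0 r1 r2 q / qpoch q (r1 ^+ 2 * r2 ^+ 2) n)
  /\ w_n n 0 r1 r2 q / qpoch q (r1 ^+ 2 * r2 ^+ 2) n = phi_n n r1 r2 q.
Proof.
rewrite -!ltr_norml => r1_lt1 r2_lt1 q_bd; split=> //.
have q_le1 : `|q| <= 1 by rewrite ler_norml; case/andP: q_bd => /ltW -> ->.
have c_lt1 : `|r1 ^+ 2 * r2 ^+ 2| < 1.
  by rewrite -exprMn normrX exprn_ilt1 // normrM mulr_ilt1.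
have qint_neq0 j := qint_neq0_real j q_bd.
rewrite pochsum3_div ?qpoch_neq0_real // w_nE expr0 !mul1r.
have r1r2_r2 : r1 * r2 * r2 = r2 ^+ 2 * r1 by ring.
by rewrite -(pochsum3_pochsum2 qint_neq0 n (r1 ^+ 2) r1r2_r2).
Qed.
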